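(* Consider the stochastic rolling-window dispatch problem $P_t$ described in the context with an optimal primal-dual solution, and define $\pi^{LMP}_t:=\lambda_t^*$ and, for ESR $i$, $\pi_{it}^{TLMP\text{-}C}:=\lambda^*_t-\xi_i^{C}\phi^*_{it}-\Delta_{it}^{C*}$, $\pi_{it}^{TLMP\text{-}D}:=\lambda^*_t-\phi^*_{it}/\xi_i^{D}+\Delta_{it}^{D*}$, where $\Delta_{it}^{C*}:=-(\bar{\mu}_{it}^{C*}-\underline{\mu}_{it}^{C*})+\sum_{k=1}^K(\bar{\mu}_{i(t+1)k}^{C*}-\underline{\mu}_{i(t+1)k}^{C*})$ and $\Delta_{it}^{D*}$ is defined identically with $D$ in place of $C$. Suppose that in window $\mathscr{H}_t$, at the optimal solution: (1) no ramping constraint of storage $i$ from $t-1$ to $t$, nor from $t$ to $t+1$ (in any scenario), is binding; and (2) no SOC limit constraint of storage $i$ is binding in any interval from $t$ to $t+W-1$ (in any scenario). Then $\pi_{it}^{TLMP\text{-}C}=\pi_{it}^{TLMP\text{-}D}=\pi^{LMP}_t$.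
   Context: Single-bus market with $N$ energy storage resources (ESRs) indexed by $i$. ESR $i$ has charging/discharging efficiencies $\xi_i^{C},\xi_i^{D}\in(0,1]$, SOC limits $\underline{E}_i\le\bar{E}_i$, charging/discharging power limits $(\underline{g}_i^{C},\bar{g}_i^{C})$, $(\underline{g}_i^{D},\bar{g}_i^{D})$, ramp limits $\underline{r}_i^{C},\bar{r}_i^{C},\underline{r}_i^{D},\bar{r}_i^{D}$, and bid-in charging benefit and discharging cost functions $f^{C}_{it},f^{D}_{it}$. At interval $t$ the operator solves, over the window $\mathscr{H}_t=\{t,\dots,t+W-1\}$, given realized inelastic demand $d_t$, $K$ demand forecast scenarios $\hat d_{t'k}$ ($t'\in\mathscr{H}_t\setminus\{t\}$) with probabilities $\epsilon_k$, and previously realized values $g^{C*}_{i(t-1)},g^{D*}_{i(t-1)},E^*_{i(t-1)}$, the problem $P_t$: minimize $\sum_i\big(f^{D}_{it}(g^{D}_{it})-f^{C}_{it}(g^{C}_{it})\big)+\sum_k\epsilon_k\sum_{t'\in\mathscr{H}_t\setminus\{t\}}\sum_i\big(f^{D}_{it'}(g^{D}_{it'k})-f^{C}_{it'}(g^{C}_{it'k})\big)$ subject to, for all $i$, $k$, $t'\in\mathscr{H}_t\setminus\{t\}$ (with the convention that in scenario $k$ the interval-$t$ variables are the binding variables $g_{it},E_{it}$): power balance $\sum_i(g^{D}_{it}-g^{C}_{it})=d_t$ (multiplier $\lambda_t$) and $\sum_i(g^{D}_{it'k}-g^{C}_{it'k})=\hat d_{t'k}$; SOC transition $E_{it}-E^*_{i(t-1)}=\xi_i^{C}g^{C}_{it}-g^{D}_{it}/\xi_i^{D}$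 (multiplier $\phi_{it}$) and $E_{it'k}-E_{i(t'-1)k}=\xi_i^{C}g^{C}_{it'k}-g^{D}_{it'k}/\xi_i^{D}$ (multiplier $\phi_{it'k}$); SOC limits $\underline{E}_i\le E_{it}\le\bar E_i$ (multipliers $\underline{\delta}_{it},\bar\delta_{it}$), $\underline{E}_i\le E_{it'k}\le\bar E_i$ (multipliers $\underline{\delta}_{it'k},\bar\delta_{it'k}$); ramping $-\underline{r}_i^{C}\le g^{C}_{it}-g^{C*}_{i(t-1)}\le\bar r_i^{C}$ (multipliers $\underline{\mu}^{C}_{it},\bar\mu^{C}_{it}$), $-\underline{r}_i^{C}\le g^{C}_{it'k}-g^{C}_{i(t'-1)k}\le\bar r_i^{C}$ (multipliers $\underline{\mu}^{C}_{it'k},\bar\mu^{C}_{it'k}$), and the same with $D$ in place of $C$; power limits $\underline g_i^{C}\le g^{C}\le\bar g_i^{C}$, $\underline g_i^{D}\le g^{D}\le\bar g_i^{D}$ for all binding and scenario variables (multipliers $\underline\rho,\bar\rho$). Multipliers of inequality constraints are nonnegative and enter the Lagrangian as $\bar\mu(x-\text{upper})+\underline\mu(\text{lower}-x)$; SOC transition equalities enter as $\phi\times$(LHS$-$RHS); power balance enters as $\lambda_t\big(d_t-\sum_i(g^D_{it}-g^C_{it})\big)$. $\pi^{LMP}_t$ is the locational marginal price and $\pi^{TLMP}_{it}$ the temporal locational marginal price of ESR $i$ (charging/discharging versions). *)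

From HB Require Import structures.
From mathcomp Require Import all_boot all_order all_algebra.
Set Implicit Arguments. Unset Strict Implicit. Unset Printing Implicit Defensive.
Import Order.TTheory GRing.Theory Num.Theory.
Local Open Scope ring_scope.

(* Interval offsets inside the window H_t = {t,...,t+W-1}: offset 0 is t,
   offsets j with 1 <= j < W are the look-ahead intervals t+j (scenario
   variables).  ESRs are 'I_N, scenarios are 'I_K. *)

Record data (R : realFieldType) (N K : nat) := Data {
  W : nat;
  xiC : 'I_N -> R; xiD : 'I_N -> R;
  Elo : 'I_N -> R; Ehi : 'I_N -> R;
  gClo : 'I_N -> R; gChi : 'I_N -> R; gDlo : 'I_N -> R; gDhi : 'I_N -> R;
  rClo : 'I_N -> R; rChi : 'I_N -> R; rDlo : 'I_N -> R; rDhi : 'I_N -> R;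
  fC : 'I_N -> nat -> R -> R;       (* charging benefit at interval t+j *)
  fD : 'I_N -> nat -> R -> R;       (* discharging cost at interval t+j *)
  d : R;
  dhat : 'I_K -> nat -> R;
  eps : 'I_K -> R;
  gC0 : 'I_N -> R; gD0 : 'I_N -> R; E0 : 'I_N -> R (* realized values at t-1 *)
}.

Record primal (R : realFieldType) (N K : nat) := Primal {
  gC : 'I_N -> R; gD : 'I_N -> R; E : 'I_N -> R;   (* binding variables at t *)
  gCs : 'I_N -> 'I_K -> nat -> R;
  gDs : 'I_N -> 'I_K -> nat -> R;
  Es  : 'I_N -> 'I_K -> nat -> R
}.

Record dual (R : realFieldType) (N K : nat) := Dual {
  lam : R;
  lams : 'I_K -> nat -> R;
  phi : 'I_N -> R;
  phis : 'I_N -> 'I_K -> nat -> R;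
  dlo : 'I_N -> R; dhi : 'I_N -> R;
  dlos : 'I_N -> 'I_K -> nat -> R; dhis : 'I_N -> 'I_K -> nat -> R;
  muClo : 'I_N -> R; muChi : 'I_N -> R; muDlo : 'I_N -> R; muDhi : 'I_N -> R;
  muClos : 'I_N -> 'I_K -> nat -> R; muChis : 'I_N -> 'I_K -> nat -> R;
  muDlos : 'I_N -> 'I_K -> nat -> R; muDhis : 'I_N -> 'I_K -> nat -> R;
  rhoClo : 'I_N -> R; rhoChi : 'I_N -> R; rhoDlo : 'I_N -> R; rhoDhi : 'I_N -> R;
  rhoClos : 'I_N -> 'I_K -> nat -> R; rhoChis : 'I_N -> 'I_K -> nat -> R;
  rhoDlos : 'I_N -> 'I_K -> nat -> R; rhoDhis : 'I_N -> 'I_K -> nat -> R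
}.

Section Problem.
Variables (R : realFieldType) (N K : nat) (D : data R N K).

Definition prevE (x : primal R N K) i k j :=
  if j == 1%N then E x i else Es x i k j.-1.
Definition prevgC (x : primal R N K) i k j :=
  if j == 1%N then gC x i else gCs x i k j.-1.
Definition prevgD (x : primal R N K) i k j :=
  if j == 1%N then gD x i else gDs x i k j.-1.

Definition objective (x : primal R N K) : R :=
  \sum_i (fD D i 0 (gD x i) - fC D i 0 (gC x i))
  + \sum_k eps D k * \sum_(1 <= j < W D) \sum_i
       (fD D i j (gDs x i k j) - fC D i j (gCs x i k j)).

Definition feasible (x : primal R N K) : Prop :=
  [/\ \sum_i (gD x i - gC x i) = d D,
      (forall k j, (1 <= j < W D)%N ->
         \sum_i (gDs x i k j - gCs x i k j) = dhat D k j),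
      (forall i, E x i - E0 D i = xiC D i * gC x i - gD x i / xiD D i),
      (forall i k j, (1 <= j < W D)%N ->
         Es x i k j - prevE x i k j = xiC D i * gCs x i k j - gDs x i k j / xiD D i)
    & [/\ (forall i, Elo D i <= E x i <= Ehi D i),
          (forall i k j, (1 <= j < W D)%N -> Elo D i <= Es x i k j <= Ehi D i),
          (forall i, - rClo D i <= gC x i - gC0 D i <= rChi D i
                  /\ - rDlo D i <= gD x i - gD0 D i <= rDhi D i),
          (forall i k j, (1 <= j < W D)%N ->
                - rClo D i <= gCs x i k j - prevgC x i k j <= rChi D i
             /\ - rDlo D i <= gDs x i k j - prevgD x i k j <= rDhi D i)
        & ((forall i, gClo D i <= gC x i <= gChi D i
                      /\ gDlo D i <= gD x i <= gDhi D i)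
            /\ (forall i k j, (1 <= j < W D)%N ->
                 gClo D i <= gCs x i k j <= gChi D i
              /\ gDlo D i <= gDs x i k j <= gDhi D i))]].

Definition lagrangian (x : primal R N K) (y : dual R N K) : R :=
  objective x
  + lam y * (d D - \sum_i (gD x i - gC x i))
  + \sum_k \sum_(1 <= j < W D)
       lams y k j * (dhat D k j - \sum_i (gDs x i k j - gCs x i k j))
  + \sum_i phi y i * (E x i - E0 D i - (xiC D i * gC x i - gD x i / xiD D i))
  + \sum_i \sum_k \sum_(1 <= j < W D) phis y i k j *
       (Es x i k j - prevE x i k j - (xiC D i * gCs x i k j - gDs x i k j / xiD D i))
  + \sum_i (dhi y i * (E x i - Ehi D i) + dlo y i * (Elo D i - E x i))
  + \sum_i \sum_k \sum_(1 <= j < W D)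
       (dhis y i k j * (Es x i k j - Ehi D i) + dlos y i k j * (Elo D i - Es x i k j))
  + \sum_i (muChi y i * (gC x i - gC0 D i - rChi D i)
            + muClo y i * (- rClo D i - (gC x i - gC0 D i))
            + muDhi y i * (gD x i - gD0 D i - rDhi D i)
            + muDlo y i * (- rDlo D i - (gD x i - gD0 D i)))
  + \sum_i \sum_k \sum_(1 <= j < W D)
           (muChis y i k j * (gCs x i k j - prevgC x i k j - rChi D i)
            + muClos y i k j * (- rClo D i - (gCs x i k j - prevgC x i k j))
            + muDhis y i k j * (gDs x i k j - prevgD x i k j - rDhi D i)
            + muDlos y i k j * (- rDlo D i - (gDs x i k j - prevgD x i k j)))
  + \sum_i (rhoChi y i * (gC x i - gChi D i) + rhoClo y i * (gClo D i - gC x i)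
            + rhoDhi y i * (gD x i - gDhi D i) + rhoDlo y i * (gDlo D i - gD x i))
  + \sum_i \sum_k \sum_(1 <= j < W D)
           (rhoChis y i k j * (gCs x i k j - gChi D i)
            + rhoClos y i k j * (gClo D i - gCs x i k j)
            + rhoDhis y i k j * (gDs x i k j - gDhi D i)
            + rhoDlos y i k j * (gDlo D i - gDs x i k j)).

Definition dual_feasible (y : dual R N K) : Prop :=
  (forall i, 0 <= dlo y i /\ 0 <= dhi y i /\ 0 <= muClo y i /\ 0 <= muChi y i
          /\ 0 <= muDlo y i /\ 0 <= muDhi y i /\ 0 <= rhoClo y i
          /\ 0 <= rhoChi y i /\ 0 <= rhoDlo y i /\ 0 <= rhoDhi y i) /\
  (forall i k j, (1 <= j < W D)%N ->
          0 <= dlos y i k j /\ 0 <= dhis y i k j /\ 0 <= muClos y i k j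
       /\ 0 <= muChis y i k j /\ 0 <= muDlos y i k j /\ 0 <= muDhis y i k j
       /\ 0 <= rhoClos y i k j /\ 0 <= rhoChis y i k j /\ 0 <= rhoDlos y i k j
       /\ 0 <= rhoDhis y i k j).

Definition compl_slack (x : primal R N K) (y : dual R N K) : Prop :=
  (forall i,
        dhi y i * (E x i - Ehi D i) = 0 /\ dlo y i * (Elo D i - E x i) = 0
     /\ muChi y i * (gC x i - gC0 D i - rChi D i) = 0
     /\ muClo y i * (- rClo D i - (gC x i - gC0 D i)) = 0
     /\ muDhi y i * (gD x i - gD0 D i - rDhi D i) = 0
     /\ muDlo y i * (- rDlo D i - (gD x i - gD0 D i)) = 0
     /\ rhoChi y i * (gC x i - gChi D i) = 0
     /\ rhoClo y i * (gClo D i - gC x i) = 0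
     /\ rhoDhi y i * (gD x i - gDhi D i) = 0
     /\ rhoDlo y i * (gDlo D i - gD x i) = 0) /\
  (forall i k j, (1 <= j < W D)%N ->
        dhis y i k j * (Es x i k j - Ehi D i) = 0
     /\ dlos y i k j * (Elo D i - Es x i k j) = 0
     /\ muChis y i k j * (gCs x i k j - prevgC x i k j - rChi D i) = 0
     /\ muClos y i k j * (- rClo D i - (gCs x i k j - prevgC x i k j)) = 0
     /\ muDhis y i k j * (gDs x i k j - prevgD x i k j - rDhi D i) = 0
     /\ muDlos y i k j * (- rDlo D i - (gDs x i k j - prevgD x i k j)) = 0
     /\ rhoChis y i k j * (gCs x i k j - gChi D i) = 0
     /\ rhoClos y i k j * (gClo D i - gCs x i k j) = 0
     /\ rhoDhis y i k j * (gDs x i k j - gDhi D i) = 0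
     /\ rhoDlos y i k j * (gDlo D i - gDs x i k j) = 0).

(* (x, y) is an optimal primal-dual solution of P_t: primal and dual
   feasibility, complementary slackness, and x minimizes the Lagrangian
   L(., y) (saddle-point / KKT characterization). *)
Definition optimal_primal_dual (x : primal R N K) (y : dual R N K) : Prop :=
  [/\ feasible x, dual_feasible y, compl_slack x y
    & forall x' : primal R N K, lagrangian x y <= lagrangian x' y].

Definition LMP (y : dual R N K) : R := lam y.

Definition DeltaC (y : dual R N K) (i : 'I_N) : R :=
  - (muChi y i - muClo y i)
  + (if (1 < W D)%N then \sum_k (muChis y i k 1 - muClos y i k 1) else 0).
Definition DeltaD (y : dual R N K) (i : 'I_N) : R :=
  - (muDhi y i - muDlo y i)
  + (if (1 < W D)%N then \sum_k (muDhis y i k 1 - muDlos y i k 1) else 0).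

Definition TLMP_C (y : dual R N K) (i : 'I_N) : R :=
  lam y - xiC D i * phi y i - DeltaC y i.
Definition TLMP_D (y : dual R N K) (i : 'I_N) : R :=
  lam y - phi y i / xiD D i + DeltaD y i.

Definition ramp_nonbinding (x : primal R N K) (i : 'I_N) : Prop :=
  [/\ - rClo D i < gC x i - gC0 D i < rChi D i,
      - rDlo D i < gD x i - gD0 D i < rDhi D i
    & (1 < W D)%N -> forall k,
        - rClo D i < gCs x i k 1 - gC x i < rChi D i
     /\ - rDlo D i < gDs x i k 1 - gD x i < rDhi D i].

Definition soc_nonbinding (x : primal R N K) (i : 'I_N) : Prop :=
  Elo D i < E x i < Ehi D i /\
  (forall k j, (1 <= j < W D)%N -> Elo D i < Es x i k j < Ehi D i).

End Problem.

From HB Require Import structures.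
From mathcomp Require Import all_boot all_order all_algebra.
From mathcomp Require Import ring lra.
Set Implicit Arguments. Unset Strict Implicit. Unset Printing Implicit Defensive.
Import Order.TTheory GRing.Theory Num.Theory.
Local Open Scope ring_scope.

(* Complementary slackness kills the multipliers of the non-binding SOC and
   ramping constraints, so both Delta terms vanish.  For phi, shift the SOC
   trajectory of ESR i by a constant s in every interval and scenario: all
   scenario SOC transitions only see differences and the SOC-limit terms have
   zero multipliers, so the Lagrangian changes by exactly s * phi_it.  Since
   the optimal point minimizes the Lagrangian for every s, phi_it = 0. *)

Lemma slack_upper_eq0 (R : numDomainType) (mu v u : R) :
  mu * (v - u) = 0 -> v < u -> mu = 0.
Proof.
by move=> cs vu; apply: (mulIf (_ : v - u != 0)); rewrite ?mul0r // subr_eq0 lt_eqF.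
Qed.

Lemma slack_lower_eq0 (R : numDomainType) (mu l v : R) :
  mu * (l - v) = 0 -> l < v -> mu = 0.
Proof.
by move=> cs lv; apply: (mulIf (_ : l - v != 0)); rewrite ?mul0r // subr_eq0 lt_eqF.
Qed.

Lemma ge_affine_eq0 (R : realFieldType) (a c : R) :
  (forall s, a <= a + s * c) -> c = 0.
Proof.
move=> ge; have : c * c <= 0 by have := ge (- c); lra.
by rewrite -expr2 le_eqVlt ltNge sqr_ge0 orbF sqrf_eq0 => /eqP.
Qed.

Lemma sum_perturb_at (R : pzSemiRingType) (n : nat) (i : 'I_n) (F G c : 'I_n -> R) :
  (forall m, G m = F m + (m == i)%:R * c m) -> \sum_m G m = \sum_m F m + c i.
Proof.
move=> FG; rewrite (eq_bigr _ (fun m _ => FG m)) big_split /=; congr (_ + _).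
rewrite (bigD1 i) //= eqxx mul1r big1 ?addr0 // => m /negbTE->.
by rewrite mul0r.
Qed.

Section Corollary.
Variables (R : realFieldType) (N K : nat) (D : data R N K).
Variables (x : primal R N K) (y : dual R N K) (i : 'I_N).

Definition shift_soc (s : R) : primal R N K :=
  Primal (gC x) (gD x) (fun n => E x n + (n == i)%:R * s)
         (gCs x) (gDs x) (fun n k j => Es x n k j + (n == i)%:R * s).

Lemma lagrangian_shift_soc (s : R) :
  dhi y i = 0 -> dlo y i = 0 ->
  (forall k j, (1 <= j < W D)%N -> dhis y i k j = 0 /\ dlos y i k j = 0) ->
  lagrangian D (shift_soc s) y = lagrangian D x y + s * phi y i.
Proof.
move=> dhi0 dlo0 ds0; rewrite /lagrangian /objective /prevE /prevgC /prevgD /=.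
have trans0 : \sum_n phi y n * (E x n + (n == i)%:R * s - E0 D n
      - (xiC D n * gC x n - gD x n / xiD D n))
    = \sum_n phi y n * (E x n - E0 D n - (xiC D n * gC x n - gD x n / xiD D n))
      + s * phi y i.
  by apply: (@sum_perturb_at _ _ i _ _ (fun n => s * phi y n)) => n; ring.
have limits0 : \sum_n (dhi y n * (E x n + (n == i)%:R * s - Ehi D n)
      + dlo y n * (Elo D n - (E x n + (n == i)%:R * s)))
    = \sum_n (dhi y n * (E x n - Ehi D n) + dlo y n * (Elo D n - E x n))
      + s * (dhi y i - dlo y i).
  apply: (@sum_perturb_at _ _ i _ _ (fun n => s * (dhi y n - dlo y n))) => n.
  ring.
have trans_scen : \sum_n \sum_k \sum_(1 <= j < W D) phis y n k j *
      (Es x n k j + (n == i)%:R * s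
       - (if j == 1%N then E x n + (n == i)%:R * s
          else Es x n k j.-1 + (n == i)%:R * s)
       - (xiC D n * gCs x n k j - gDs x n k j / xiD D n))
    = \sum_n \sum_k \sum_(1 <= j < W D) phis y n k j *
      (Es x n k j - (if j == 1%N then E x n else Es x n k j.-1)
       - (xiC D n * gCs x n k j - gDs x n k j / xiD D n)).
  apply: eq_bigr => n _; apply: eq_bigr => k _; apply: eq_bigr => j _.
  by case: ifP => _; ring.
have limits_scen : \sum_n \sum_k \sum_(1 <= j < W D)
      (dhis y n k j * (Es x n k j + (n == i)%:R * s - Ehi D n)
       + dlos y n k j * (Elo D n - (Es x n k j + (n == i)%:R * s)))
    = \sum_n \sum_k \sum_(1 <= j < W D)
      (dhis y n k j * (Es x n k j - Ehi D n) + dlos y n k j * (Elo D n - Es x n k j)).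
  apply: eq_bigr => n _; apply: eq_bigr => k _.
  rewrite big_nat_cond [RHS]big_nat_cond; apply: eq_bigr => j /andP[jW _].
  case: eqP => [->|_] /=; last by ring.
  by have [-> ->] := ds0 k j jW; ring.
by rewrite trans0 trans_scen limits0 limits_scen dhi0 dlo0; ring.
Qed.

Hypothesis cs : compl_slack D x y.
Hypothesis ramp : ramp_nonbinding D x i.
Hypothesis soc : soc_nonbinding D x i.

Lemma soc_mults_eq0 :
  [/\ dhi y i = 0, dlo y i = 0
    & forall k j, (1 <= j < W D)%N -> dhis y i k j = 0 /\ dlos y i k j = 0].
Proof.
have [[/andP[Elo_E E_Ehi] socs] [cs0 css]] := (soc, cs).
have [cs_hi [cs_lo _]] := cs0 i.
split; [exact: slack_upper_eq0 cs_hi E_Ehi | exact: slack_lower_eq0 cs_lo Elo_E|].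
move=> k j jW; have [css_hi [css_lo _]] := css i k j jW.
have /andP[Elo_Es Es_Ehi] := socs k j jW.
by split; [exact: slack_upper_eq0 css_hi Es_Ehi | exact: slack_lower_eq0 css_lo Elo_Es].
Qed.

Lemma phi_eq0 :
  (forall x' : primal R N K, lagrangian D x y <= lagrangian D x' y) -> phi y i = 0.
Proof.
move=> Lmin; have [dhi0 dlo0 ds0] := soc_mults_eq0.
apply: (@ge_affine_eq0 _ (lagrangian D x y)) => s.
by rewrite -lagrangian_shift_soc.
Qed.

Lemma ramp_mults_eq0 :
  [/\ muChi y i = 0, muClo y i = 0, muDhi y i = 0 & muDlo y i = 0].
Proof.
have [/andP[C_lo C_hi] /andP[D_lo D_hi] _] := ramp.
have [_ [_ [csC_hi [csC_lo [csD_hi [csD_lo _]]]]]] := cs.1 i.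
split; [exact: slack_upper_eq0 csC_hi C_hi | exact: slack_lower_eq0 csC_lo C_lo |
        exact: slack_upper_eq0 csD_hi D_hi | exact: slack_lower_eq0 csD_lo D_lo].
Qed.

Lemma next_ramp_mults_eq0 k : (1 < W D)%N ->
  [/\ muChis y i k 1 = 0, muClos y i k 1 = 0, muDhis y i k 1 = 0
    & muDlos y i k 1 = 0].
Proof.
move=> W1; have [_ _ /(_ W1 k) [/andP[C_lo C_hi] /andP[D_lo D_hi]]] := ramp.
have W1' : (1 <= 1 < W D)%N by rewrite leqnn.
have [_ [_ [csC_hi [csC_lo [csD_hi [csD_lo _]]]]]] := cs.2 i k 1%N W1'.
rewrite /prevgC /prevgD /= in csC_hi csC_lo csD_hi csD_lo.
split; [exact: slack_upper_eq0 csC_hi C_hi | exact: slack_lower_eq0 csC_lo C_lo |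
        exact: slack_upper_eq0 csD_hi D_hi | exact: slack_lower_eq0 csD_lo D_lo].
Qed.

Lemma DeltaC_eq0 : DeltaC D y i = 0.
Proof.
rewrite /DeltaC; have [-> -> _ _] := ramp_mults_eq0; rewrite subrr oppr0 add0r.
case: ifP => // W1; rewrite big1 // => k _.
by have [-> -> _ _] := next_ramp_mults_eq0 k W1; rewrite subrr.
Qed.

Lemma DeltaD_eq0 : DeltaD D y i = 0.
Proof.
rewrite /DeltaD; have [_ _ -> ->] := ramp_mults_eq0; rewrite subrr oppr0 add0r.
case: ifP => // W1; rewrite big1 // => k _.
by have [_ _ -> ->] := next_ramp_mults_eq0 k W1; rewrite subrr.
Qed.

End Corollary.

Theorem corollary1 (R : realFieldType) (N K : nat) (D : data R N K)
  (x : primal R N K) (y : dual R N K) (i : 'I_N) :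
  (forall n : 'I_N, 0 < xiC D n <= 1 /\ 0 < xiD D n <= 1) ->
  (forall k, 0 <= eps D k) -> \sum_k eps D k = 1 ->
  (1 <= W D)%N ->
  optimal_primal_dual D x y ->
  ramp_nonbinding D x i ->
  soc_nonbinding D x i ->
  TLMP_C D y i = TLMP_D D y i /\ TLMP_D D y i = LMP y.
Proof.
move=> _ _ _ _ [_ _ cs Lmin] ramp soc.
rewrite /TLMP_C /TLMP_D /LMP (phi_eq0 cs soc Lmin) (DeltaC_eq0 cs ramp)
        (DeltaD_eq0 cs ramp) mulr0 mul0r !subr0 addr0.
by split.
Qed.
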